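(* Let $\mathcal V_0 = [(\underline v_{t|0})_{t=0}^{T-1}, (\bar v_{t|0})_{t=0}^{T-1}]$ be an interval and let $\mathcal V_1 := [(\underline v_{1|0}, \ldots, \underline v_{T-1|0}, 0), (\bar v_{1|0}, \ldots, \bar v_{T-1|0}, 1)]$ (with $0, 1 \in \mathbb R^{m_u}$ the all-zero and all-one vectors). Let $x_0, x_1 \in \mathbb R^{n_x}$ be arbitrary. Suppose $\{\lambda_{t|0}, \rho_{t|0}\}_{t=0}^{T}$ and $\{\mu_{t|0}, \underline\nu_{t|0}, \bar\nu_{t|0}, \sigma_{t|0}\}_{t=0}^{T-1}$ are feasible multipliers for $\mathbf D(\mathcal V_0; x_0)$. Define - $(\lambda_{t|1}, \rho_{t|1}) := (\lambda_{t+1|0}, \rho_{t+1|0})$ for $t = 0, \ldots, T-1$, - $(\lambda_{T|1}, \rho_{T|1}) := 0$, - $(\mu_{t|1}, \underline\nu_{t|1}, \bar\nu_{t|1}, \sigma_{t|1}) := (\mu_{t+1|0}, \underline\nu_{t+1|0}, \bar\nu_{t+1|0}, \sigma_{t+1|0})$ for $t = 0, \ldots, T-2$, - $(\mu_{T-1|1}, \underline\nu_{T-1|1}, \bar\nu_{T-1|1}, \sigma_{T-1|1}) := 0$. Then $\{\lambda_{t|1}, \rho_{t|1}\}_{t=0}^{T}$, $\{\mu_{t|1}, \underline\nu_{t|1}, \bar\nu_{t|1}, \sigma_{t|1}\}_{t=0}^{T-1}$ are feasible multipliers for $\mathbf D(\mathcal V_1; x_1)$.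
   Context: Fix integers $n_x, n_u, m_u \ge 0$ and $T \ge 1$. Let $A \in \mathbb R^{n_x \times n_x}$, $B \in \mathbb R^{n_x \times (n_u+m_u)}$, and let $F, G, h$ be a matrix pair and vector defining the polyhedron $\mathcal D = \{(x,u) \in \mathbb R^{n_x} \times \mathbb R^{n_u+m_u} : F x + G u \le h\}$, assumed to contain the origin. Let $V \in \mathbb R^{m_u \times (n_u+m_u)}$ be the selection matrix extracting the $m_u$ binary entries of an input vector $u$. Let $Q$ (with $n_x$ columns) and $R$ (with $n_u + m_u$ columns) be weight matrices, possibly rank deficient. An interval is a set $\mathcal V = [(\underline v_t)_{t=0}^{T-1}, (\bar v_t)_{t=0}^{T-1}] \subset \mathbb R^{T m_u}$ with $\underline v_t, \bar v_t \in \{0,1\}^{m_u}$, $\underline v_t \le \bar v_t$. For an interval $\mathcal V$ and an initial state $\xi \in \mathbb R^{n_x}$, the QP $\mathbf P(\mathcal V; \xi)$ is: minimize $\sum_{t=0}^T |Q x_t|^2 + \sum_{t=0}^{T-1} |R u_t|^2$ over $x_0,\ldots,x_T \in \mathbb R^{n_x}$, $u_0, \ldots, u_{T-1} \in \mathbb R^{n_u+m_u}$ subject to $x_0 = \xi$, $x_{t+1} = A x_t + B u_t$, $(x_t, u_t) \in \mathcal D$, $\underline v_t \le V u_t \le \bar v_t$ for $t = 0, \ldots, T-1$. Its Lagrangian dual $\mathbf D(\mathcal V; \xi)$ is: maximize $$-\sum_{t=0}^{T} |\rho_t/2|^2 - \sum_{t=0}^{T-1}\big(|\sigma_t/2|^2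 + h'\mu_t + \bar v_t'\bar\nu_t - \underline v_t'\underline\nu_t\big) - \xi'\lambda_0$$ over multipliers $\{\lambda_t, \rho_t\}_{t=0}^T$, $\{\mu_t, \underline\nu_t, \bar\nu_t, \sigma_t\}_{t=0}^{T-1}$ of appropriate dimensions subject to: $Q'\rho_t + \lambda_t - A'\lambda_{t+1} + F'\mu_t = 0$ for $t=0,\ldots,T-1$; $Q'\rho_T + \lambda_T = 0$; $R'\sigma_t - B'\lambda_{t+1} + G'\mu_t + V'(\bar\nu_t - \underline\nu_t) = 0$ for $t = 0, \ldots, T-1$; $(\mu_t, \underline\nu_t, \bar\nu_t) \ge 0$ for $t=0,\ldots,T-1$. ''Feasible multipliers'' means a point satisfying these constraints. $|\cdot|$ is the Euclidean norm and $'$ denotes transpose. *)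

From HB Require Import structures.
From mathcomp Require Import all_boot all_order all_algebra.
Set Implicit Arguments. Unset Strict Implicit. Unset Printing Implicit Defensive.
Import Order.TTheory GRing.Theory Num.Theory.
Local Open Scope ring_scope.

Definition nonneg_cV (R : realFieldType) (k : nat) (v : 'cV[R]_k) : Prop :=
  forall i : 'I_k, 0 <= v i ord0.

Definition is_interval (R : realFieldType) (m T : nat)
    (vl vu : nat -> 'cV[R]_m) : Prop :=
  forall t, (t < T)%N -> forall i : 'I_m,
    (vl t i ord0 = 0 \/ vl t i ord0 = 1) /\
    (vu t i ord0 = 0 \/ vu t i ord0 = 1) /\
    vl t i ord0 <= vu t i ord0.

(* Multiplier sequences are indexed by nat; only indices
   t <= T (for lam, rho) and t < T (for mu, nul, nuu, sig) matter.
   The interval (vl, vu) and the initial state xi only enter the dual objective,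
   not its constraints; they are kept as arguments to mirror "D(V; xi)". *)
Definition dual_feasible (K : realFieldType) (nx nu m p q r T : nat)
    (A : 'M[K]_nx) (B : 'M[K]_(nx, nu)) (F : 'M[K]_(p, nx)) (G : 'M[K]_(p, nu))
    (V : 'M[K]_(m, nu)) (Q : 'M[K]_(q, nx)) (R : 'M[K]_(r, nu))
    (vl vu : nat -> 'cV[K]_m) (xi : 'cV[K]_nx)
    (lam : nat -> 'cV[K]_nx) (rho : nat -> 'cV[K]_q)
    (mu : nat -> 'cV[K]_p) (nul nuu : nat -> 'cV[K]_m) (sig : nat -> 'cV[K]_r)
    : Prop :=
  (forall t, (t < T)%N ->
     Q^T *m rho t + lam t - A^T *m lam t.+1 + F^T *m mu t = 0) /\
  Q^T *m rho T + lam T = 0 /\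
  (forall t, (t < T)%N ->
     R^T *m sig t - B^T *m lam t.+1 + G^T *m mu t + V^T *m (nuu t - nul t) = 0) /\
  (forall t, (t < T)%N ->
     nonneg_cV (mu t) /\ nonneg_cV (nul t) /\ nonneg_cV (nuu t)).

From HB Require Import structures.
From mathcomp Require Import all_boot all_order all_algebra.
Import Order.TTheory GRing.Theory Num.Theory.
Local Open Scope ring_scope.

(* Shifting the multipliers one step forward and padding with zeros keeps
   every constraint of the dual: for t < T-1 the shifted constraint is the
   original one at t+1, at t = T-1 the state constraint becomes the original
   terminal constraint (the padded lam_T, mu_{T-1} vanish) and the input
   constraint becomes 0 = 0.  The interval and initial state only enter the
   dual objective, so they may be changed freely. *)

Definition shift_pad {M : zmodType} (n : nat) (f : nat -> M) (t : nat) : M :=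
  if (t < n)%N then f t.+1 else 0.

Lemma nonneg_cV0 (K : realFieldType) (k : nat) : nonneg_cV (0 : 'cV[K]_k).
Proof. by move=> i; rewrite mxE. Qed.

Section ShiftedMultipliers.

Variables (K : realFieldType) (nx nu m p q r T : nat).
Variables (A : 'M[K]_nx) (B : 'M[K]_(nx, nu)) (F : 'M[K]_(p, nx))
  (G : 'M[K]_(p, nu)) (V : 'M[K]_(m, nu)) (Q : 'M[K]_(q, nx))
  (R : 'M[K]_(r, nu)).
Variables (vl vu vl' vu' : nat -> 'cV[K]_m) (xi xi' : 'cV[K]_nx).
Variables (lam : nat -> 'cV[K]_nx) (rho : nat -> 'cV[K]_q)
  (mu : nat -> 'cV[K]_p) (nul nuu : nat -> 'cV[K]_m) (sig : nat -> 'cV[K]_r).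

Hypothesis feas :
  dual_feasible T.+1 A B F G V Q R vl vu xi lam rho mu nul nuu sig.

Let lam' := shift_pad T.+1 lam.
Let rho' := shift_pad T.+1 rho.
Let mu' := shift_pad T mu.
Let nul' := shift_pad T nul.
Let nuu' := shift_pad T nuu.
Let sig' := shift_pad T sig.

Lemma shift_pad_state_stationarity t : (t < T.+1)%N ->
  Q^T *m rho' t + lam' t - A^T *m lam' t.+1 + F^T *m mu' t = 0.
Proof.
case: feas => stat_state [terminal _].
rewrite ltnS leq_eqVlt => /orP[/eqP-> | ltT].
- by rewrite /lam' /rho' /mu' /shift_pad ltnSn !ltnn !mulmx0 subr0 addr0.
- by rewrite /lam' /rho' /mu' /shift_pad !ltnS ltT (ltnW ltT); apply: stat_state.
Qed.

Lemma shift_pad_terminal : Q^T *m rho' T.+1 + lam' T.+1 = 0.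
Proof. by rewrite /lam' /rho' /shift_pad ltnn mulmx0 addr0. Qed.

Lemma shift_pad_input_stationarity t : (t < T.+1)%N ->
  R^T *m sig' t - B^T *m lam' t.+1 + G^T *m mu' t + V^T *m (nuu' t - nul' t) = 0.
Proof.
case: feas => _ [_ [stat_input _]].
rewrite ltnS leq_eqVlt => /orP[/eqP-> | ltT].
- by rewrite /sig' /lam' /mu' /nuu' /nul' /shift_pad !ltnn subrr !mulmx0 subr0 !addr0.
- rewrite /sig' /lam' /mu' /nuu' /nul' /shift_pad !ltnS ltT.
  exact: stat_input.
Qed.

Lemma shift_pad_nonneg t : (t < T.+1)%N ->
  [/\ nonneg_cV (mu' t), nonneg_cV (nul' t) & nonneg_cV (nuu' t)].
Proof.
case: feas => _ [_ [_ sign]] _.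
rewrite /mu' /nul' /nuu' /shift_pad.
case: ifP => [ltT | _]; last by split; exact: nonneg_cV0.
by have [? [? ?]] := sign t.+1 ltT.
Qed.

Lemma dual_feasible_shift_pad :
  dual_feasible T.+1 A B F G V Q R vl' vu' xi' lam' rho' mu' nul' nuu' sig'.
Proof.
split; [exact: shift_pad_state_stationarity | split; [exact: shift_pad_terminal|]].
split; first exact: shift_pad_input_stationarity.
by move=> t /shift_pad_nonneg[].
Qed.

End ShiftedMultipliers.

Theorem lemma1 (K : realFieldType) (nx n_u m_u p q r T : nat) (HT : (1 <= T)%N)
    (A : 'M[K]_nx) (B : 'M[K]_(nx, n_u + m_u))
    (F : 'M[K]_(p, nx)) (G : 'M[K]_(p, n_u + m_u))
    (V : 'M[K]_(m_u, n_u + m_u)) (Q : 'M[K]_(q, nx)) (R : 'M[K]_(r, n_u + m_u))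
    (vl0 vu0 : nat -> 'cV[K]_m_u) (x0 x1 : 'cV[K]_nx)
    (lam0 : nat -> 'cV[K]_nx) (rho0 : nat -> 'cV[K]_q)
    (mu0 : nat -> 'cV[K]_p) (nul0 nuu0 : nat -> 'cV[K]_m_u)
    (sig0 : nat -> 'cV[K]_r) :
  is_interval T vl0 vu0 ->
  dual_feasible T A B F G V Q R vl0 vu0 x0 lam0 rho0 mu0 nul0 nuu0 sig0 ->
  let vl1 := fun t => if (t < T.-1)%N then vl0 t.+1 else 0 in
  let vu1 := fun t => if (t < T.-1)%N then vu0 t.+1 else const_mx 1 in
  let lam1 := fun t => if (t < T)%N then lam0 t.+1 else 0 in
  let rho1 := fun t => if (t < T)%N then rho0 t.+1 else 0 in
  let mu1 := fun t => if (t < T.-1)%N then mu0 t.+1 else 0 in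
  let nul1 := fun t => if (t < T.-1)%N then nul0 t.+1 else 0 in
  let nuu1 := fun t => if (t < T.-1)%N then nuu0 t.+1 else 0 in
  let sig1 := fun t => if (t < T.-1)%N then sig0 t.+1 else 0 in
  dual_feasible T A B F G V Q R vl1 vu1 x1 lam1 rho1 mu1 nul1 nuu1 sig1.
Proof.
case: T HT => // T _ _ feas.
exact: dual_feasible_shift_pad feas.
Qed.
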